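(* Let $C'$ be a generic smooth non-hyperelliptic curve of genus $3$ over $\mathbb{C}$. Let $L'_1\subsetneq L'_2\subsetneq L'_3$ and $\tilde L_1\subsetneq\tilde L_2\subsetneq\tilde L_3$ be two full isotropic flags in $\mathrm{Jac}(C')[2]$ (so $|L'_k|=|\tilde L_k|=2^k$ and $L'_3,\tilde L_3$ are maximal isotropic) such that $\tilde L_1\oplus L'_3={L'_2}^{\perp}$, $\tilde L_2\oplus L'_3={L'_1}^{\perp}$ and $\tilde L_3\oplus L'_3=\mathrm{Jac}(C')[2]$. Let $\alpha'$ be the nonzero element of $L'_1$. Then for every subgroup $H\subset\tilde L_3$ of order $4$: $\#(\Gamma_H\cap\Sigma_{\alpha'})=0$ if $H=\tilde L_2$, and $\#(\Gamma_H\cap\Sigma_{\alpha'})=2$ otherwise.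
   Context: $\mathrm{Jac}(C')[2]\cong\mathbb{F}_2^6$ carries the Weil pairing $\langle\cdot,\cdot\rangle$, a nondegenerate symplectic form; for a subgroup $G$, $G^\perp=\{a:\langle a,g\rangle=0\ \forall g\in G\}$. A theta characteristic is a divisor class $\theta$ with $2\theta=K_{C'}$, odd if $h^0(\theta)$ is odd. For nonzero $\gamma$, the Steiner system $\Sigma_\gamma$ is the set of odd theta characteristics $\theta$ with $\theta+\gamma$ odd. For an isotropic subgroup $H$ of order $4$, $\Gamma_H$ denotes the set of odd theta characteristics $\theta$ such that $\theta+h$ is odd for all $h\in H$ (a set of the form $\{\theta_0+h: h\in H\}$ with four elements). *)

(* Abstract combinatorial model of the 2-torsion of the
   Jacobian of a genus-3 curve together with its theta characteristics. *)
From mathcomp Require Import all_boot all_order all_algebra.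
Set Implicit Arguments. Unset Strict Implicit. Unset Printing Implicit Defensive.
Import GRing.Theory.
Local Open Scope ring_scope.

(* Jac(C')[2] ~ F_2^6 *)
Definition V := 'rV['F_2]_6.

Definition symplectic (w : V -> V -> 'F_2) : Prop :=
  [/\ (forall x y z, w (x + y) z = w x z + w y z),
      (forall x y z, w x (y + z) = w x y + w x z),
      (forall x, w x x = 0) &
      (forall x, (forall y, w x y = 0) -> x = 0)].

(* Theta characteristics: a J[2]-torsor Th (act t a = t + a) with parity
   function odd (odd t <-> h^0(t) odd), satisfying the Riemann--Mumford
   relation: a |-> e(t+a) - e(t) is a quadratic form with polar form the
   Weil pairing; in genus 3 there are exactly 2^(g-1)(2^g-1) = 28 odd ones. *)
Definition theta_structure (w : V -> V -> 'F_2) (Th : finType)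
    (act : Th -> V -> Th) (odd : pred Th) : Prop :=
  [/\ (forall t, act t 0 = t),
      (forall t a b, act (act t a) b = act t (a + b)),
      (forall t s, exists! a, act t a = s),
      (forall t a b,
         odd (act t (a + b)) (+) odd (act t a) (+) odd (act t b) (+) odd t
         = (w a b == 1)) &
      #|[set t | odd t]| = 28%N].

Definition subgroupV (G : {set V}) : Prop :=
  (0 : V) \in G /\ forall x y, x \in G -> y \in G -> x + y \in G.

Definition isotropic (w : V -> V -> 'F_2) (G : {set V}) : Prop :=
  forall x y, x \in G -> y \in G -> w x y = 0.

Definition perp (w : V -> V -> 'F_2) (G : {set V}) : {set V} :=
  [set a | [forall g in G, w a g == 0]].

Definition dsum (A B C : {set V}) : Prop :=
  A :&: B = [set 0 : V] /\ [set a + b | a in A, b in B] = C.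

Definition iso_flag (w : V -> V -> 'F_2) (L1 L2 L3 : {set V}) : Prop :=
  [/\ [/\ subgroupV L1, subgroupV L2 & subgroupV L3],
      [/\ #|L1| = 2%N, #|L2| = 4%N & #|L3| = 8%N],
      L1 \proper L2, L2 \proper L3 & isotropic w L3].

Definition Sigma (Th : finType) (act : Th -> V -> Th) (odd : pred Th)
    (g : V) : {set Th} :=
  [set t | odd t && odd (act t g)].

Definition Gamma (Th : finType) (act : Th -> V -> Th) (odd : pred Th)
    (H : {set V}) : {set Th} :=
  [set t | odd t && [forall h in H, odd (act t h)]].

(* Fix a base point t0 and let f x be the parity of t0 + x, with sign s x = (-1)^(f x).
   The Riemann--Mumford relation f(x+a+b) + f(x+a) + f(x+b) + f(x) = w(a,b) turns
   every product of three translates of s into a single translate, and every product of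
   two distinct translates into a multiple of the character x |-> (-1)^w(x,d) for some
   d <> 0, whose sum vanishes; moreover the sum of s is 64 - 2*28 = 8.  Writing H = {0, h1, h2, h1 + h2},
   the theta characteristics counted are the t0 + x with f = 1 at x, x + h1, x + h2 and
   x + alpha (the value at x + h1 + h2 is then forced, H being isotropic), so expanding
   the product of the four indicators (1 - s)/2 gives
     2 #(Gamma_H cap Sigma_alpha) = 4 - (1 + (-1)^w(h1,alpha)) (1 + (-1)^w(h2,alpha)).
   Finally alpha is orthogonal to Lt2, which lies in L1^perp, while an H <> Lt2
   orthogonal to alpha would make alpha orthogonal to Lt3 = Lt2 + H and to the
   isotropic L3, hence to all of Jac[2]. *)

From mathcomp Require Import all_boot all_order all_algebra.
From mathcomp Require Import ring zify.
Set Implicit Arguments. Unset Strict Implicit. Unset Printing Implicit Defensive.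
Local Open Scope ring_scope.
Import GRing.Theory Num.Theory.

Lemma F2_eq1D (y z : 'F_2) : (y + z == 1) = (y == 1) (+) (z == 1).
Proof. by case: y z => [[|[|]] //= ?] [[|[|]] //= ?]. Qed.

Lemma F2_addr_eq0 (y z : 'F_2) : (y + z == 0) = (y == z).
Proof. by case: y z => [[|[|]] //= ?] [[|[|]] //= ?]. Qed.

Lemma F2_neq0 (z : 'F_2) : (z != 0) = (z == 1).
Proof. by case: z => [[|[|]] //= ?]. Qed.

Lemma addrr_F2 (M : lmodType 'F_2) (v : M) : v + v = 0.
Proof.
have two0 : (2%:R : 'F_2) = 0 by apply/val_inj.
by rewrite -mulr2n -scaler_nat two0 scale0r.
Qed.

Lemma addr_eq0_F2 (M : lmodType 'F_2) (u v : M) : (u + v == 0) = (u == v).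
Proof. by rewrite -[RHS](inj_eq (addIr v)) addrr_F2. Qed.

Section SignSums.

Variables (U : finLmodType 'F_2) (w : U -> U -> 'F_2).
Hypotheses (wDl : forall x y z, w (x + y) z = w x z + w y z)
           (wDr : forall x y z, w x (y + z) = w x y + w x z)
           (w_alt : forall x, w x x = 0)
           (w_nondeg : forall x, (forall y, w x y = 0) -> x = 0).

Lemma w0l (y : U) : w 0 y = 0.
Proof. by apply: (addrI (w 0 y)); rewrite -wDl !addr0. Qed.

Lemma w_sym (x y : U) : w x y = w y x.
Proof.
have := w_alt (x + y); rewrite wDl !wDr !w_alt add0r addr0 => /eqP.
by rewrite F2_addr_eq0 => /eqP.
Qed.

Lemma sum_signr_pairing (d : U) : d != 0 -> \sum_x (-1) ^+ (w x d == 1) = 0 :> int.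
Proof.
move=> d_nz; have [z /eqP wzd] : exists z, w z d == 1.
  apply/existsP; apply: contraR d_nz; rewrite negb_exists => /forallP wd0.
  by apply/eqP/w_nondeg => y; apply/eqP; rewrite w_sym -[_ == 0]negbK F2_neq0 wd0.
set S := \sum_x _; have S_opp : S = - S.
  rewrite {1}/S (reindex_inj (addIr z)) -sumrN; apply: eq_bigr => x _.
  by rewrite wDl F2_eq1D wzd eqxx addbT signrN.
have : S *+ 2 == 0 by rewrite mulr2n {2}S_opp subrr.
by rewrite mulrn_eq0 => /eqP.
Qed.

Definition triple_sign (a b c : U) : int := (-1) ^+ (w a b + w b c + w a c == 1).

Variable f : U -> bool.
Hypothesis f_quad : forall x a b,
  f (x + (a + b)) (+) f (x + a) (+) f (x + b) (+) f x = (w a b == 1).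

Local Notation sgn x := ((-1) ^+ f x : int).

Lemma signr_mul2_shift (x d : U) :
  sgn x * sgn (x + d) = (-1) ^+ (f d (+) f 0) * (-1) ^+ (w x d == 1).
Proof.
rewrite -!signr_addb -(f_quad 0 x d) !add0r.
by case: (f x); case: (f (x + d)); case: (f d); case: (f 0).
Qed.

Lemma signr_mul3_shift (x a b c : U) :
  sgn (x + a) * sgn (x + b) * sgn (x + c) = triple_sign a b c * sgn (x + (a + b + c)).
Proof.
have shift y : x + c + (y + c) = x + y by rewrite addrACA addrr_F2 addr0.
have := f_quad (x + c) (a + c) (b + c).
rewrite [a + c + _]addrACA addrr_F2 addr0 !shift -addrA [c + (a + b)]addrC.
rewrite wDl !wDr w_alt addr0 (w_sym c b) [w a b + _ + _]addrAC => quad.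
rewrite /triple_sign -!signr_addb -quad.
by case: (f (x + a)); case: (f (x + b)); case: (f (x + c)); case: (f (x + _)).
Qed.

Lemma sum_signr_shift (a : U) : \sum_x sgn (x + a) = \sum_x sgn x.
Proof. by rewrite [RHS](reindex_inj (addIr a)). Qed.

Lemma sum_signr_mul2 (a b : U) : a != b -> \sum_x sgn (x + a) * sgn (x + b) = 0.
Proof.
move=> ab; rewrite (reindex_inj (addIr a)).
under eq_bigr => x _ do rewrite -!addrA addrr_F2 addr0 signr_mul2_shift.
by rewrite -mulr_sumr sum_signr_pairing ?mulr0 ?addr_eq0_F2.
Qed.

Lemma sum_signr_mul3 (a b c : U) :
  \sum_x sgn (x + a) * sgn (x + b) * sgn (x + c) = triple_sign a b c * \sum_x sgn x.
Proof.
under eq_bigr => x _ do rewrite signr_mul3_shift.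
by rewrite -mulr_sumr sum_signr_shift.
Qed.

Lemma sum_signr_mul4 (a b c d : U) : a + b + c != d ->
  \sum_x sgn (x + a) * sgn (x + b) * sgn (x + c) * sgn (x + d) = 0.
Proof.
move=> abcd; under eq_bigr => x _ do rewrite signr_mul3_shift -mulrA.
by rewrite -mulr_sumr sum_signr_mul2 ?mulr0.
Qed.

Lemma sum_signr : \sum_x sgn x = #|U|%:R - 2 * #|[set x | f x]|%:R.
Proof.
rewrite (eq_bigr (fun x => 1 - (f x : nat)%:R *+ 2)) => [|x _]; last by case: (f x).
rewrite sumrB sumr_const sumrMnl -natr_sum -sum1dep_card mulr_natl.
by rewrite [in RHS]big_mkcond.
Qed.

Lemma card_parity4 (p0 p1 p2 p3 : U) :
    uniq [:: p0; p1; p2; p3] -> p0 + p1 + p2 != p3 ->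
  16 * (#|[set x | [&& f (x + p0), f (x + p1), f (x + p2) & f (x + p3)]]|%:R : int)
  = #|U|%:R - 4 * \sum_x sgn x
    - (triple_sign p1 p2 p3 + triple_sign p0 p2 p3 + triple_sign p0 p1 p3
       + triple_sign p0 p1 p2) * \sum_x sgn x.
Proof.
rewrite /= !inE !negb_or => /and4P[/and3P[n01 n02 n03] /andP[n12 n13] n23 _] n3.
rewrite -sum1dep_card big_mkcond natr_sum mulr_sumr.
rewrite (eq_bigr (fun x => (1 - sgn (x + p0)) * (1 - sgn (x + p1))
                          * (1 - sgn (x + p2)) * (1 - sgn (x + p3)))) => [|x _]; last first.
  by case: (f (x + p0)); case: (f (x + p1)); case: (f (x + p2)); case: (f (x + p3)).
have expand (e0 e1 e2 e3 : int) : (1 - e0) * (1 - e1) * (1 - e2) * (1 - e3) =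
    1 - (e0 + e1 + e2 + e3) + (e0 * e1 + e0 * e2 + e0 * e3 + e1 * e2 + e1 * e3 + e2 * e3)
    - (e1 * e2 * e3 + e0 * e2 * e3 + e0 * e1 * e3 + e0 * e1 * e2) + e0 * e1 * e2 * e3.
  by ring.
under eq_bigr do rewrite expand.
rewrite !(big_split, sumrB, sumrN) /= sumr_const !sum_signr_shift !sum_signr_mul2 //.
rewrite !sum_signr_mul3 sum_signr_mul4 //.
ring.
Qed.

Lemma card_parity_isotropic (a b c : U) :
    a != 0 -> b != 0 -> a != b -> c \notin [set 0; a; b; a + b] -> w a b = 0 ->
  16 * (#|[set x | [&& f x, f (x + a), f (x + b) & f (x + c)]]|%:R : int)
  = #|U|%:R - 4 * \sum_x sgn x
    - (1 + (-1) ^+ (w a c == 1)) * (1 + (-1) ^+ (w b c == 1)) * \sum_x sgn x.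
Proof.
move=> a0 b0 ab; rewrite !inE !negb_or -!andbA => /and4P[c0 ca cb cab] wab.
have -> : [set x | [&& f x, f (x + a), f (x + b) & f (x + c)]]
        = [set x | [&& f (x + 0), f (x + a), f (x + b) & f (x + c)]].
  by apply/setP => x; rewrite !inE addr0.
rewrite card_parity4; last by rewrite add0r eq_sym.
  by rewrite /triple_sign !w0l wab !add0r !addr0 F2_eq1D signr_addb expr0; ring.
by rewrite /= !inE !negb_or !(eq_sym 0) a0 b0 c0 ab (eq_sym a) ca (eq_sym b) cb.
Qed.

End SignSums.

Lemma forall_in_set4 (T : finType) (P : pred T) (a b c d : T) :
  [forall x in [set a; b; c; d], P x] = [&& P a, P b, P c & P d].
Proof.
apply/forall_inP/and4P => [allP | [Pa Pb Pc Pd] x].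
  by split; apply: allP; rewrite !inE eqxx ?orbT.
by rewrite !inE -!orbA => /or4P[] /eqP->.
Qed.

Lemma exists_unique_bij (A : choiceType) (B : eqType) (g : A -> B) :
  (forall b, exists! a, g a = b) -> bijective g.
Proof.
move=> g_reg; have ex b : exists a, g a == b.
  by have [a [gab _]] := g_reg b; exists a; apply/eqP.
exists (fun b => xchoose (ex b)) => [a | b]; last exact/eqP/(xchooseP (ex b)).
have [a' [_ uniq_a']] := g_reg (g a).
exact: etrans (esym (uniq_a' _ (eqP (xchooseP (ex (g a)))))) (uniq_a' a erefl).
Qed.

Lemma card_Gamma_Sigma (w : V -> V -> 'F_2) (Th : finType) (act : Th -> V -> Th)
    (odd : pred Th) (t0 : Th) (a b c : V) :
    theta_structure w act odd -> w a b = 0 ->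
  #|Gamma act odd [set 0; a; b; a + b] :&: Sigma act odd c|
  = #|[set x | [&& odd (act t0 x), odd (act t0 (x + a)), odd (act t0 (x + b))
                 & odd (act t0 (x + c))]]|.
Proof.
case=> _ actA act_reg quad _ wab.
rewrite -(on_card_preimset (onW_bij _ (exists_unique_bij (act_reg t0)))).
apply: eq_card => x; rewrite !inE forall_in_set4 !actA addr0.
(* As [w a b = 0], oddness at [x], [x + a], [x + b] forces oddness at [x + (a + b)]. *)
have := quad (act t0 x) a b; rewrite !actA wab eq_sym oner_eq0.
case: (odd (act t0 (x + (a + b)))); case: (odd (act t0 x)); case: (odd (act t0 (x + a)));
  by case: (odd (act t0 (x + b))); case: (odd (act t0 (x + c))).
Qed.

Lemma subgroupV_card4 (H : {set V}) : subgroupV H -> #|H| = 4%N ->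
  exists h1 h2, [/\ h1 != 0, h2 != 0, h1 != h2 & H = [set 0; h1; h2; h1 + h2]].
Proof.
case=> H0 HD cH.
have /card_gt1P[h1 [h2 [/setD1P[h1_nz h1H] /setD1P[h2_nz h2H] h12]]] : (1 < #|H :\ 0%R|)%N.
  by move: cH; rewrite (cardsD1 0) H0 add1n => -[->].
exists h1, h2; split=> //; apply/esym/eqP; rewrite eqEcard cH.
apply/andP; split.
  by apply/subsetP => h; rewrite !inE -!orbA => /or4P[] /eqP-> //; apply: HD.
have h12_nz : h1 + h2 != 0 by rewrite addr_eq0_F2.
have h1_12 : h1 != h1 + h2 by rewrite -addr_eq0_F2 addrA addrr_F2 add0r.
have h2_12 : h2 != h1 + h2 by rewrite -addr_eq0_F2 addrCA addrr_F2 addr0.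
rewrite (@eq_card _ _ (mem [:: 0; h1; h2; h1 + h2])) => [|h]; last by rewrite !inE -!orbA.
rewrite (card_uniqP _) //= !inE !negb_or !(eq_sym 0).
by rewrite h1_nz h2_nz h12_nz h12 h1_12 h2_12.
Qed.

Lemma subgroupV_index2 (A B : {set V}) (h : V) : subgroupV A -> subgroupV B ->
  A \subset B -> #|B| = (2 * #|A|)%N -> h \in B -> h \notin A ->
  B = A :|: [set a + h | a in A].
Proof.
move=> [_ AD] [_ BD] AB cB hB hA.
have disj : A :&: [set a + h | a in A] = set0.
  apply/setP => b; rewrite !inE; apply/negP => /andP[bA /imsetP[a aA def_b]].
  by move: hA; rewrite (_ : h = b + a) ?AD // def_b addrAC addrr_F2 add0r.
have sub : A :|: [set a + h | a in A] \subset B.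
  rewrite subUset AB; apply/subsetP => _ /imsetP[a aA ->].
  exact: BD (subsetP AB a aA) hB.
apply/eqP; rewrite eq_sym eqEcard sub cardsU disj cards0 subn0 card_imset //.
  by rewrite cB mul2n -addnn leqnn.
exact: addIr.
Qed.

Lemma dsum_subl (A B C : {set V}) : dsum A B C -> 0 \in B -> A \subset C.
Proof. by case=> _ <- B0; apply/subsetP => a aA; rewrite -[a]addr0 imset2_f. Qed.

Lemma dsum_orth_eq0 (w : V -> V -> 'F_2) (A B : {set V}) (c : V) : symplectic w -> dsum A B [set: V] ->
  {in A, forall a, w a c = 0} -> {in B, forall b, w b c = 0} -> c = 0.
Proof.
case=> wDl wDr w_alt w_nondeg [_ AB] Ac Bc; apply: w_nondeg => v.
have : v \in [set: V] by rewrite inE.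
rewrite -AB => /imset2P[a b aA bB ->].
by rewrite (w_sym wDl wDr w_alt) wDl Ac ?Bc ?addr0.
Qed.

Lemma orth_index2_sub (w : V -> V -> 'F_2) (A B C : {set V}) (c : V) : symplectic w ->
    subgroupV A -> subgroupV B -> A \subset B -> #|B| = (2 * #|A|)%N ->
    isotropic w C -> dsum B C [set: V] -> c \in C -> c != 0 ->
    {in A, forall a, w a c = 0} ->
  forall h, h \in B -> w h c = 0 -> h \in A.
Proof.
move=> w_sympl sgA sgB AB cB isoC dsBC cC c_nz Ac h hB hc.
apply: contraNT c_nz => hA; apply/eqP/(dsum_orth_eq0 w_sympl dsBC) => [b|b bC]; last exact: isoC.
rewrite (subgroupV_index2 sgA sgB AB cB hB hA) inE => /orP[/Ac // | /imsetP[a aA ->]].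
by case: w_sympl => wDl _ _ _; rewrite wDl Ac ?hc ?addr0.
Qed.

Lemma cardV : #|V| = 64%N.
Proof. by rewrite card_mx card_Fp. Qed.

Lemma card_Gamma_Sigma_isotropic (w : V -> V -> 'F_2) (Th : finType)
    (act : Th -> V -> Th) (odd : pred Th) (a b c : V) :
    symplectic w -> theta_structure w act odd ->
    a != 0 -> b != 0 -> a != b -> c \notin [set 0; a; b; a + b] -> w a b = 0 ->
  ((2 * #|Gamma act odd [set 0; a; b; a + b] :&: Sigma act odd c|)%:R : int)
  = 4 - (1 + (-1) ^+ (w a c == 1)) * (1 + (-1) ^+ (w b c == 1)).
Proof.
move=> [wDl wDr w_alt w_nondeg] theta a0 b0 ab cH wab.
have [_ actA act_reg quad c28] := theta.
have /card_gt0P[t0 _] : (0 < #|[set t : Th | odd t]|)%N by rewrite c28.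
pose f x := odd (act t0 x).
have f_quad x a' b' : f (x + (a' + b')) (+) f (x + a') (+) f (x + b') (+) f x = (w a' b' == 1).
  by have := quad (act t0 x) a' b'; rewrite !actA.
have card_f : #|[set x | f x]| = 28%N.
  rewrite -c28 -(on_card_preimset (onW_bij _ (exists_unique_bij (act_reg t0)))).
  by apply: eq_card => x; rewrite !inE.
have := card_parity_isotropic wDl wDr w_alt w_nondeg f_quad a0 b0 ab cH wab.
rewrite (card_Gamma_Sigma t0 c theta wab) (sum_signr f) card_f cardV.
set N := #|_|; set P := (1 + _) * (1 + _).
lia.
Qed.

Theorem lemma2p6 (w : V -> V -> 'F_2) (Th : finType) (act : Th -> V -> Th)
    (odd : pred Th) (L1 L2 L3 Lt1 Lt2 Lt3 : {set V}) (alpha : V) :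
  symplectic w ->
  theta_structure w act odd ->
  iso_flag w L1 L2 L3 ->
  iso_flag w Lt1 Lt2 Lt3 ->
  dsum Lt1 L3 (perp w L2) ->
  dsum Lt2 L3 (perp w L1) ->
  dsum Lt3 L3 [set: V] ->
  alpha \in L1 -> alpha != 0 ->
  forall H : {set V}, subgroupV H -> H \subset Lt3 -> #|H| = 4%N ->
    #|Gamma act odd H :&: Sigma act odd alpha| = (if H == Lt2 then 0 else 2)%N.
Proof.
move=> w_sympl theta [[_ _ sgL3] _ L12 L23 isoL3] [[_ sgLt2 sgLt3] [_ cLt2 cLt3] _ Lt23 isoLt3]
  _ dsLt2 dsLt3 aL1 a_nz H sgH HLt3 cH.
have [wDl _ _ _] := w_sympl.
have [h1 [h2 [h1_nz h2_nz h12 defH]]] := subgroupV_card4 sgH cH.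
have aL3 : alpha \in L3 by rewrite (subsetP (proper_sub L23)) ?(subsetP (proper_sub L12)).
have aH : alpha \notin H.
  by apply: contra a_nz => /(subsetP HLt3) aLt3; rewrite -in_set1 -dsLt3.1 inE aLt3.
have w12 : w h1 h2 = 0 by apply: isoLt3; apply: (subsetP HLt3); rewrite defH !inE eqxx ?orbT.
have aLt2 : {in Lt2, forall g, w g alpha = 0}.
  move=> g /(subsetP (dsum_subl dsLt2 sgL3.1)).
  by rewrite inE => /forall_inP/(_ _ aL1)/eqP.
have orthH : (w h1 alpha == 0) && (w h2 alpha == 0) = (H == Lt2).
  apply/andP/eqP => [[/eqP w1 /eqP w2] | HLt2]; last first.
    by split; apply/eqP/aLt2; rewrite -HLt2 defH !inE eqxx ?orbT.
  apply/eqP; rewrite eqEcard cH cLt2 leqnn andbT; apply/subsetP => h hH.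
  apply: (orth_index2_sub w_sympl sgLt2 sgLt3 (proper_sub Lt23) _ isoL3 dsLt3 aL3 a_nz aLt2).
  - by rewrite cLt3 cLt2.
  - exact: subsetP HLt3 h hH.
  move: hH; rewrite defH !inE -!orbA.
  by case/or4P=> /eqP->; rewrite ?(w0l wDl) ?wDl ?w1 ?w2 ?addr0.
have := card_Gamma_Sigma_isotropic w_sympl theta h1_nz h2_nz h12 _ w12.
rewrite -defH => /(_ alpha aH); rewrite -orthH -!F2_neq0; move: #|_ :&: _| => N.
by case: (w h1 alpha == 0); case: (w h2 alpha == 0); rewrite /= ?expr0 ?expr1 => eqN; clear -eqN; lia.
Qed.
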